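(* For every $i\in\{1,2,3\}$ we have $e_i\bar\Lambda e_i=e_iZ(\bar\Lambda)e_i$.
   Context: Let $k$ be an algebraically closed field of characteristic $2$, let $n\geq 3$ and $c=2^{n-2}$. Let $Q$ be the quiver with vertices $1,2,3$ and arrows $\beta:1\to 2$, $\gamma:2\to 1$, $\delta:2\to 3$, $\eta:3\to 2$, $\kappa:1\to 3$, $\lambda:3\to 1$. Paths are written left to right: $xy$ means first $x$, then $y$; $e_i$ denotes (the image in $\bar\Lambda$ of) the trivial path at vertex $i$. Let $I\subseteq kQ$ be the ideal generated by $\beta\delta-\kappa\lambda\kappa$, $\eta\gamma-\lambda\kappa\lambda$, $\delta\lambda-\gamma\beta\gamma$, $\kappa\eta-\beta\gamma\beta$, $\lambda\beta-(\eta\delta)^{c-1}\eta$, $\gamma\kappa-(\delta\eta)^{c-1}\delta$, $\gamma\beta\delta$, $\delta\eta\gamma$, $\lambda\kappa\eta$. Put $\bar\Lambda=kQ/I$ (Erdmann's algebra $Q(3\mathcal{K})^c$). *)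

(* Erdmann's algebra Q(3K)^c = kQ/I, encoded via formal
   linear combinations of paths in the path algebra kQ, with the quotient
   handled by the (Prop-valued) ideal-membership predicate. *)
From HB Require Import structures.
From mathcomp Require Import all_boot all_order all_algebra.
Set Implicit Arguments. Unset Strict Implicit. Unset Printing Implicit Defensive.
Import GRing.Theory.
Local Open Scope ring_scope.

(* Vertices 1,2,3 of the paper are the ordinals 0,1,2 of 'I_3. *)
Definition vertex := 'I_3.
Definition v1 : vertex := @Ordinal 3 0 isT.
Definition v2 : vertex := @Ordinal 3 1 isT.
Definition v3 : vertex := @Ordinal 3 2 isT.

Definition arrow := 'I_6.
Definition a_beta   : arrow := @Ordinal 6 0 isT.
Definition a_gamma  : arrow := @Ordinal 6 1 isT.
Definition a_delta  : arrow := @Ordinal 6 2 isT.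
Definition a_eta    : arrow := @Ordinal 6 3 isT.
Definition a_kappa  : arrow := @Ordinal 6 4 isT.
Definition a_lambda : arrow := @Ordinal 6 5 isT.

(* beta:1->2, gamma:2->1, delta:2->3, eta:3->2, kappa:1->3, lambda:3->1 *)
Definition src (a : arrow) : vertex :=
  nth v1 [:: v1; v2; v2; v3; v1; v3] a.
Definition tgt (a : arrow) : vertex :=
  nth v1 [:: v2; v1; v3; v2; v3; v1] a.

(* A path: start vertex and the word of arrows, read left to right
   (xy = first x then y). (i, [::]) is the trivial path e_i. *)
Definition path := (vertex * seq arrow)%type.

Fixpoint composable (v : vertex) (w : seq arrow) : bool :=
  if w is a :: w' then (src a == v) && composable (tgt a) w' else true.
Definition valid (p : path) : bool := composable p.1 p.2.
Definition pend (p : path) : vertex := last p.1 [seq tgt a | a <- p.2].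

Section PathAlgebra.
Variable k : fieldType.

Definition kQ := seq (k * path)%type.

(* Coefficient of the (valid) path p; invalid "paths" count as zero. *)
Definition coef (x : kQ) (p : path) : k :=
  \sum_(t <- x | valid t.2 && (t.2 == p)) t.1.

Definition eqkQ (x y : kQ) : Prop := forall p : path, coef x p = coef y p.

Definition addQ (x y : kQ) : kQ := x ++ y.
Definition scaleQ (c : k) (x : kQ) : kQ := [seq (c * t.1, t.2) | t <- x].
Definition subQ (x y : kQ) : kQ := addQ x (scaleQ (-1) y).
Definition mulQ (x y : kQ) : kQ :=
  flatten [seq [seq (t.1 * u.1, (t.2.1, t.2.2 ++ u.2.2))
               | u <- y & valid t.2 && valid u.2 && (pend t.2 == u.2.1)]
          | t <- x].

Definition pth (p : path) : kQ := [:: (1, p)].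
Definition idem (i : vertex) : kQ := pth (i, [::]).
Definition arr (a : arrow) : kQ := pth (src a, [:: a]).

Definition b := arr a_beta.
Definition g := arr a_gamma.
Definition d := arr a_delta.
Definition h := arr a_eta.
Definition kp := arr a_kappa.
Definition l := arr a_lambda.

Definition mul3 x y z := mulQ (mulQ x y) z.

Definition powz (x y : kQ) (m : nat) (z : kQ) : kQ :=
  iter m (fun w => mulQ (mulQ x y) w) z.

Definition cpar (n : nat) : nat := 2 ^ (n - 2).

Definition gens (n : nat) : seq kQ :=
  [:: subQ (mulQ b d) (mul3 kp l kp);
      subQ (mulQ h g) (mul3 l kp l);
      subQ (mulQ d l) (mul3 g b g);
      subQ (mulQ kp h) (mul3 b g b);
      subQ (mulQ l b) (powz h d (cpar n).-1 h);
      subQ (mulQ g kp) (powz d h (cpar n).-1 d);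
      mul3 g b d;
      mul3 d h g;
      mul3 l kp h ].

Definition gen (n : nat) (j : 'I_9) : kQ := nth [::] (gens n) j.

Definition inI (n : nat) (x : kQ) : Prop :=
  exists s : seq (k * path * 'I_9 * path)%type,
    eqkQ x (flatten [seq scaleQ t.1.1.1
                       (mul3 (pth t.1.1.2) (gen n t.1.2) (pth t.2)) | t <- s]).

Definition centralI (n : nat) (z : kQ) : Prop :=
  forall y : kQ, inI n (subQ (mulQ z y) (mulQ y z)).

End PathAlgebra.

From Pilot Require Import Defs.
From HB Require Import structures.
From mathcomp Require Import all_boot all_order all_algebra.
From mathcomp Require Import ring.
Set Implicit Arguments. Unset Strict Implicit. Unset Printing Implicit Defensive.
Import GRing.Theory.
Local Open Scope ring_scope.

(* Modulo I every path is zero or equal to a normal word: rewriting with the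
   relations while appending one arrow at a time keeps words in a finite list
   of shapes.  The normal words that are cycles at a vertex are e_i, beta gamma,
   kappa lambda, (beta gamma)^2, gamma beta, lambda kappa, (delta eta)^j and
   (eta delta)^j, and each is the corner at its vertex of the central element
   1, beta gamma + gamma beta, kappa lambda + lambda kappa,
   (beta gamma)^2 + (gamma beta)^2 or (delta eta)^j + (eta delta)^j; such a sum
   of cycles is central once it commutes with every arrow.  Linearity then
   gives e_i L e_i <= e_i Z(L) e_i for L = kQ/I; the converse inclusion is
   trivial. *)

Section PathAlgebra.
Variable k : fieldType.
Implicit Types (x y z : kQ k) (c : k) (p q : Defs.path) (t u : k * Defs.path).

Definition adjacent p q := valid p && valid q && (pend p == q.1).

Definition mul_term t y : kQ k :=
  [seq (t.1 * u.1, (t.2.1, t.2.2 ++ u.2.2)) | u <- y & adjacent t.2 u.2].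

Lemma coef_nil p : coef (@nil (k * Defs.path)) p = 0.
Proof. by rewrite /coef big_nil. Qed.

Lemma coef_cons c q x p :
  coef ((c, q) :: x) p = (if valid q && (q == p) then c else 0) + coef x p.
Proof. by rewrite /coef big_cons /=; case: ifP => _ //; rewrite add0r. Qed.

Lemma coef_cat x y p : coef (x ++ y) p = coef x p + coef y p.
Proof. by rewrite /coef big_cat. Qed.

Lemma coef_scale c x p : coef (scaleQ c x) p = c * coef x p.
Proof.
elim: x => [|[a q] x IH]; first by rewrite coef_nil mulr0.
rewrite /= !coef_cons IH mulrDr; congr (_ + _).
by case: ifP; rewrite ?mulr0.
Qed.

Lemma coef_sub x y p : coef (subQ x y) p = coef x p - coef y p.
Proof. by rewrite coef_cat coef_scale mulN1r. Qed.

Lemma coef_pth q p : coef (pth k q) p = if valid q && (q == p) then 1 else 0.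
Proof. by rewrite coef_cons coef_nil addr0. Qed.

Lemma mulQ_cons t x y : mulQ (t :: x) y = mul_term t y ++ mulQ x y.
Proof. by []. Qed.

Lemma mulQ_single t y : mulQ [:: t] y = mul_term t y.
Proof. by rewrite mulQ_cons cats0. Qed.

Lemma mulQ_catl x1 x2 y : mulQ (x1 ++ x2) y = mulQ x1 y ++ mulQ x2 y.
Proof. by rewrite /mulQ map_cat flatten_cat. Qed.

Lemma mul_term_nil t : mul_term t [::] = [::].
Proof. by []. Qed.

Lemma mul_term_cons t u y : mul_term t (u :: y) =
  (if adjacent t.2 u.2 then [:: (t.1 * u.1, (t.2.1, t.2.2 ++ u.2.2))] else [::])
  ++ mul_term t y.
Proof. by rewrite /mul_term /=; case: ifP. Qed.

Lemma mul_term_cat t y1 y2 : mul_term t (y1 ++ y2) = mul_term t y1 ++ mul_term t y2.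
Proof. by rewrite /mul_term filter_cat map_cat. Qed.

Lemma coef_mul_term_scale c q y p :
  coef (mul_term (c, q) y) p = c * coef (mul_term (1, q) y) p.
Proof.
elim: y => [|u y IH]; first by rewrite coef_nil mulr0.
rewrite !mul_term_cons !coef_cat IH mulrDr /=.
case: (adjacent _ _); rewrite ?coef_cons ?coef_nil; last by ring.
by case: (valid _ && _); ring.
Qed.

Lemma coef_mulQ_nilr x p : coef (mulQ x [::]) p = 0.
Proof. by elim: x => [|t x IH]; rewrite ?coef_nil // mulQ_cons. Qed.

Lemma coef_mulQ_catr x y1 y2 p :
  coef (mulQ x (y1 ++ y2)) p = coef (mulQ x y1) p + coef (mulQ x y2) p.
Proof.
elim: x => [|t x IH]; first by rewrite !coef_nil addr0.
by rewrite !mulQ_cons mul_term_cat !coef_cat IH addrACA.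
Qed.

Lemma coef_mulQ_scalel c x y p : coef (mulQ (scaleQ c x) y) p = c * coef (mulQ x y) p.
Proof.
elim: x => [|[a q] x IH]; first by rewrite coef_nil mulr0.
rewrite /= !mulQ_cons !coef_cat IH mulrDr.
by rewrite coef_mul_term_scale [in RHS]coef_mul_term_scale mulrA.
Qed.

Lemma coef_mulQ_scaler c x y p : coef (mulQ x (scaleQ c y)) p = c * coef (mulQ x y) p.
Proof.
elim: x => [|t x IH]; first by rewrite coef_nil mulr0.
rewrite !mulQ_cons !coef_cat IH mulrDr; congr (_ + _); clear IH.
elim: y => [|u y IH]; first by rewrite coef_nil mulr0.
rewrite /= !mul_term_cons !coef_cat IH mulrDr /=.
case: (adjacent _ _); rewrite ?coef_cons ?coef_nil; last by ring.
by case: (valid _ && _); ring.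
Qed.

Lemma coef_mulQ_termr x c q p : coef (mulQ x [:: (c, q)]) p = c * coef (mulQ x (pth k q)) p.
Proof. by rewrite -coef_mulQ_scaler /= mulr1. Qed.

Lemma coef_mulQ_terml c q y p : coef (mulQ [:: (c, q)] y) p = c * coef (mulQ (pth k q) y) p.
Proof. by rewrite -coef_mulQ_scalel /= mulr1. Qed.

Lemma coef_mulQ_consr x u y p :
  coef (mulQ x (u :: y)) p = coef (mulQ x [:: u]) p + coef (mulQ x y) p.
Proof. exact: (coef_mulQ_catr x [:: u] y). Qed.

Lemma coef_idem_mull i x p :
  coef (mulQ (idem k i) x) p = if p.1 == i then coef x p else 0.
Proof.
rewrite mulQ_single; elim: x => [|[c [s w]] x IH]; first by rewrite !coef_nil; case: ifP.
rewrite mul_term_cons coef_cat IH coef_cons /adjacent /valid /pend /=.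
case: (eqVneq i s) => [<-|Hne]; last first.
  rewrite andbF coef_nil add0r.
  case: (eqVneq (s, w) p) => [<-|Hp] /=; last by rewrite andbF add0r.
  by rewrite eq_sym (negbTE Hne).
rewrite andbT; case Vw: (composable i w); rewrite ?coef_cons ?coef_nil /= ?Vw ?mul1r;
  case: (eqVneq (i, w) p) => [<-|Hp]; rewrite /valid /= ?Vw ?eqxx ?andbT ?andbF ?addr0 ?add0r //.
Qed.

Lemma coef_idem_mulr i x p :
  coef (mulQ x (idem k i)) p = if pend p == i then coef x p else 0.
Proof.
elim: x => [|[c [s w]] x IH]; first by rewrite !coef_nil; case: ifP.
rewrite mulQ_cons mul_term_cons mul_term_nil cats0 coef_cat IH coef_cons /adjacent /= andbT cats0.
case Vw: (valid (s, w)) => /=; last first.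
  by rewrite coef_nil add0r; case: ifP => _; rewrite ?add0r.
case: (eqVneq (pend (s, w)) i) => [Hi|Hne].
- rewrite coef_cons coef_nil Vw mulr1 /= addr0.
  case: (eqVneq (s, w) p) => [<-|Hp] /=; first by rewrite Hi eqxx.
  by case: ifP; rewrite ?add0r.
- rewrite coef_nil add0r.
  case: (eqVneq (s, w) p) => [<-|Hp] /=; last by case: ifP; rewrite ?add0r.
  by rewrite (negbTE Hne).
Qed.

Lemma coef_corner i x p : coef (mul3 (idem k i) x (idem k i)) p =
  if (p.1 == i) && (pend p == i) then coef x p else 0.
Proof. by rewrite coef_idem_mulr coef_idem_mull; case: (p.1 == i); case: ifP. Qed.

Section Ideal.
Variable n : nat.

Definition gen_comb (s : seq (k * Defs.path * 'I_9 * Defs.path)) : kQ k :=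
  flatten [seq scaleQ r.1.1.1 (mul3 (pth k r.1.1.2) (gen k n r.1.2) (pth k r.2)) | r <- s].

Lemma coef_gen_comb_cat s1 s2 p :
  coef (gen_comb (s1 ++ s2)) p = coef (gen_comb s1) p + coef (gen_comb s2) p.
Proof. by rewrite /gen_comb map_cat flatten_cat coef_cat. Qed.

Lemma coef_gen_comb_scale c s p :
  coef (gen_comb [seq (c * r.1.1.1, r.1.1.2, r.1.2, r.2) | r <- s]) p
  = c * coef (gen_comb s) p.
Proof.
elim: s => [|r s IH]; first by rewrite coef_nil mulr0.
by rewrite /gen_comb /= !coef_cat -!/(gen_comb _) IH !coef_scale mulrDr mulrA.
Qed.

Lemma inI_lincomb x y z a c : inI n x -> inI n y ->
  (forall p, coef z p = a * coef x p + c * coef y p) -> inI n z.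
Proof.
move=> [sx Hx] [sy Hy] Hz.
exists ([seq (a * r.1.1.1, r.1.1.2, r.1.2, r.2) | r <- sx] ++
        [seq (c * r.1.1.1, r.1.1.2, r.1.2, r.2) | r <- sy]) => p.
by rewrite -/(gen_comb _) coef_gen_comb_cat !coef_gen_comb_scale -Hx -Hy Hz.
Qed.

Lemma inI_eq x z : inI n x -> (forall p, coef z p = coef x p) -> inI n z.
Proof.
move=> Hx Hz; apply: (inI_lincomb (a := 1) (c := 0) Hx Hx) => p.
by rewrite Hz mul1r mul0r addr0.
Qed.

Lemma inI_eq0 z : (forall p, coef z p = 0) -> inI n z.
Proof. by move=> Hz; exists [::] => p; rewrite Hz coef_nil. Qed.

Lemma inI_gen p j q : inI n (mul3 (pth k p) (gen k n j) (pth k q)).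
Proof. by exists [:: (1, p, j, q)] => r; rewrite /= cats0 coef_scale mul1r. Qed.

Lemma central_nil : centralI n (@nil (k * Defs.path)).
Proof. by move=> y; apply: inI_eq0 => p; rewrite coef_sub coef_mulQ_nilr coef_nil subrr. Qed.

Lemma central_cat z1 z2 : centralI n z1 -> centralI n z2 -> centralI n (z1 ++ z2).
Proof.
move=> H1 H2 y; apply: (inI_lincomb (a := 1) (c := 1) (H1 y) (H2 y)) => p.
by rewrite !coef_sub mulQ_catl coef_cat coef_mulQ_catr; ring.
Qed.

Lemma central_scale c z : centralI n z -> centralI n (scaleQ c z).
Proof.
move=> Hz y; apply: (inI_lincomb (a := c) (c := 0) (Hz y) (Hz y)) => p.
by rewrite !coef_sub coef_mulQ_scalel coef_mulQ_scaler; ring.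
Qed.

Lemma centralI_paths z :
  (forall q, inI n (subQ (mulQ z (pth k q)) (mulQ (pth k q) z))) -> centralI n z.
Proof.
move=> Hz y; elim: y => [|[c q] y IH].
  by apply: inI_eq0 => p; rewrite coef_sub coef_mulQ_nilr coef_nil subrr.
apply: (inI_lincomb (a := c) (c := 1) (Hz q) IH) => p.
rewrite !coef_sub coef_mulQ_consr mulQ_cons -mulQ_single coef_cat.
by rewrite coef_mulQ_termr coef_mulQ_terml; ring.
Qed.

End Ideal.

End PathAlgebra.

Notation aB := a_beta. Notation aG := a_gamma. Notation aD := a_delta.
Notation aH := a_eta. Notation aK := a_kappa. Notation aL := a_lambda.

Lemma vertexW (P : vertex -> Prop) : P v1 -> P v2 -> P v3 -> forall v, P v.
Proof. by move=> ? ? ? [[|[|[|//]]] Hv]; rewrite (bool_irrelevance Hv isT). Qed.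

Lemma arrowW (P : arrow -> Prop) :
  P aB -> P aG -> P aD -> P aH -> P aK -> P aL -> forall a, P a.
Proof. by move=> ? ? ? ? ? ? [[|[|[|[|[|[|//]]]]]] Ha]; rewrite (bool_irrelevance Ha isT). Qed.

Lemma composable_cat v w1 w2 :
  composable v (w1 ++ w2) = composable v w1 && composable (last v (map tgt w1)) w2.
Proof. by elim: w1 v => [|a w1 IH] v //=; rewrite IH andbA. Qed.

Definition wpow (j : nat) (w : seq arrow) := iter j (cat w) [::].

Lemma wpowS j w : wpow j.+1 w = w ++ wpow j w.
Proof. by []. Qed.

Lemma wpowSr j w : wpow j.+1 w = wpow j w ++ w.
Proof. by elim: j => [|j IH]; [rewrite /= cats0 | rewrite wpowS {1}IH catA]. Qed.

Lemma wpow_add i j w : wpow (i + j) w = wpow i w ++ wpow j w.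
Proof. by elim: i => [|i IH] //; rewrite addSn !wpowS IH catA. Qed.

Lemma wpow_rot j x y : x ++ wpow j (y ++ x) = wpow j (x ++ y) ++ x.
Proof. by elim: j => [|j IH]; [rewrite /= cats0 | rewrite !wpowS -!catA IH]. Qed.

Lemma wpow_split j x y : wpow j.+1 (x ++ y) = x ++ wpow j (y ++ x) ++ y.
Proof. by rewrite wpowS -catA wpow_rot. Qed.

Lemma composable_wpow_dh j : composable v2 (wpow j [:: aD; aH]).
Proof. by elim: j. Qed.

Lemma composable_wpow_hd j : composable v3 (wpow j [:: aH; aD]).
Proof. by elim: j. Qed.

Lemma last_wpow_dh j : last v2 (map tgt (wpow j [:: aD; aH])) = v2.
Proof. by elim: j. Qed.

Lemma last_wpow_hd j : last v3 (map tgt (wpow j [:: aH; aD])) = v3.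
Proof. by elim: j. Qed.

(* The j-th generator of I is [rel_lhs j - rel_rhs (c - 1) j], [None] standing
   for a zero right-hand side. *)
Definition rel_lhs (j : nat) : seq arrow :=
  match j with
  | 0 => [:: aB; aD] | 1 => [:: aH; aG] | 2 => [:: aD; aL] | 3 => [:: aK; aH]
  | 4 => [:: aL; aB] | 5 => [:: aG; aK] | 6 => [:: aG; aB; aD] | 7 => [:: aD; aH; aG]
  | _ => [:: aL; aK; aH] end.

Definition rel_rhs (m j : nat) : option (seq arrow) :=
  match j with
  | 0 => Some [:: aK; aL; aK] | 1 => Some [:: aL; aK; aL] | 2 => Some [:: aG; aB; aG]
  | 3 => Some [:: aB; aG; aB] | 4 => Some (wpow m [:: aH; aD] ++ [:: aH])
  | 5 => Some (wpow m [:: aD; aH] ++ [:: aD]) | _ => None end.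

Inductive wordeq (m : nat) : option (seq arrow) -> option (seq arrow) -> Prop :=
| wordeq_refl x : wordeq m x x
| wordeq_sym x y : wordeq m x y -> wordeq m y x
| wordeq_trans x y z : wordeq m x y -> wordeq m y z -> wordeq m x z
| wordeq_rel (j : 'I_9) u v :
    wordeq m (Some (u ++ rel_lhs j ++ v)) (omap (fun w => u ++ w ++ v) (rel_rhs m j)).

Lemma wordeq_catr m x y w : wordeq m x y -> wordeq m (omap (cat^~ w) x) (omap (cat^~ w) y).
Proof.
elim=> {x y} [x|x y _ IH|x y z _ IH1 _ IH2|j u v].
- exact: wordeq_refl.
- exact: wordeq_sym.
- exact: wordeq_trans IH1 IH2.
- have := wordeq_rel m j u (v ++ w); rewrite /= -!catA.
  by case: (rel_rhs m j) => [r|] //=; rewrite -!catA.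
Qed.

Lemma wordeq_catl m x y w : wordeq m x y -> wordeq m (omap (cat w) x) (omap (cat w) y).
Proof.
elim=> {x y} [x|x y _ IH|x y z _ IH1 _ IH2|j u v].
- exact: wordeq_refl.
- exact: wordeq_sym.
- exact: wordeq_trans IH1 IH2.
- have := wordeq_rel m j (w ++ u) v; rewrite /= -!catA.
  by case: (rel_rhs m j) => [r|] //=; rewrite -!catA.
Qed.

Lemma wordeq_relS m j (Hj : (j < 9)%N) u v W W' :
  W = u ++ rel_lhs j ++ v -> Some W' = omap (fun w => u ++ w ++ v) (rel_rhs m j) ->
  wordeq m (Some W) (Some W').
Proof. by move=> -> ->; exact: (wordeq_rel m (Ordinal Hj)). Qed.

Lemma wordeq_rel0 m j (Hj : (j < 9)%N) u v W :
  W = u ++ rel_lhs j ++ v -> rel_rhs m j = None -> wordeq m (Some W) None.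
Proof. by move=> -> HR; have := wordeq_rel m (Ordinal Hj) u v; rewrite /= HR. Qed.

Lemma wordeq0_ctx m W u v W0 :
  wordeq m (Some W0) None -> W = u ++ W0 ++ v -> wordeq m (Some W) None.
Proof. by move=> H0 ->; have := wordeq_catl u (wordeq_catr v H0). Qed.

Ltac solve_words := rewrite /= ?cats0 -?catA /= ?cats0; try reflexivity.

(* A parameter [m.+1 = c - 1] of [wordeq] records that [c >= 2] is needed.
   In lemma names [b g d h k l] stand for the arrows and a capitalised pair
   such as [DH] for a power [(delta eta)^j]. *)

Lemma bgk_eq0 m : wordeq m.+1 (Some [:: aB; aG; aK]) None.
Proof.
apply: (wordeq_trans (y := Some ([:: aB] ++ wpow m.+1 [:: aD; aH] ++ [:: aD]))).
  apply: (wordeq_relS (j := 5) isT (u := [:: aB]) (v := [::])); solve_words.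
apply: (wordeq_trans (y := Some ([:: aK; aL; aK; aH] ++ wpow m [:: aD; aH] ++ [:: aD]))).
  apply: (wordeq_relS (j := 0) isT (u := [::])
           (v := [:: aH] ++ wpow m [:: aD; aH] ++ [:: aD])); solve_words.
apply: (wordeq_rel0 (j := 8) isT (u := [:: aK]) (v := wpow m [:: aD; aH] ++ [:: aD])); solve_words.
Qed.

Lemma klb_eq0 m : wordeq m.+1 (Some [:: aK; aL; aB]) None.
Proof.
apply: (wordeq_trans (y := Some ([:: aK; aH; aD] ++ wpow m [:: aH; aD] ++ [:: aH]))).
  apply: (wordeq_relS (j := 4) isT (u := [:: aK]) (v := [::])); solve_words.
apply: (wordeq_trans (y := Some ([:: aB; aG; aB; aD] ++ wpow m [:: aH; aD] ++ [:: aH]))).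
  apply: (wordeq_relS (j := 3) isT (u := [::])
           (v := [:: aD] ++ wpow m [:: aH; aD] ++ [:: aH])); solve_words.
apply: (wordeq_rel0 (j := 6) isT (u := [:: aB]) (v := wpow m [:: aH; aD] ++ [:: aH])); solve_words.
Qed.

Lemma lklb_eq0 m : wordeq m.+1 (Some [:: aL; aK; aL; aB]) None.
Proof.
apply: (wordeq_trans (y := Some ([:: aL; aK; aH; aD] ++ wpow m [:: aH; aD] ++ [:: aH]))).
  apply: (wordeq_relS (j := 4) isT (u := [:: aL; aK]) (v := [::])); solve_words.
apply: (wordeq_rel0 (j := 8) isT (u := [::])
         (v := [:: aD] ++ wpow m [:: aH; aD] ++ [:: aH])); solve_words.
Qed.

Lemma hgb_eq0 m : wordeq m.+1 (Some [:: aH; aG; aB]) None.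
Proof.
apply: (wordeq_trans (y := Some [:: aL; aK; aL; aB])); last exact: lklb_eq0.
apply: (wordeq_relS (j := 1) isT (u := [::]) (v := [:: aB])); solve_words.
Qed.

Lemma HDhg_eq0 m j : wordeq m (Some (wpow j.+1 [:: aH; aD] ++ [:: aH; aG])) None.
Proof.
apply: (wordeq_rel0 (j := 7) isT (u := wpow j [:: aH; aD] ++ [:: aH]) (v := [::])) => //.
by rewrite wpowSr -!catA.
Qed.

Lemma DHg_eq0 m j : wordeq m (Some (wpow j.+1 [:: aD; aH] ++ [:: aG])) None.
Proof.
apply: (wordeq_rel0 (j := 7) isT (u := wpow j [:: aD; aH]) (v := [::])) => //.
by rewrite wpowSr -!catA.
Qed.

Lemma lbg_eq0 m : wordeq m.+1 (Some [:: aL; aB; aG]) None.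
Proof.
apply: (wordeq_trans (y := Some (wpow m.+1 [:: aH; aD] ++ [:: aH; aG]))); last exact: HDhg_eq0.
apply: (wordeq_relS (j := 4) isT (u := [::]) (v := [:: aG])); solve_words.
Qed.

Lemma DHdl_eq0 m j : wordeq m (Some (wpow j.+1 [:: aD; aH] ++ [:: aD; aL])) None.
Proof.
apply: (wordeq_trans (y := Some (wpow j.+1 [:: aD; aH] ++ [:: aG; aB; aG]))).
  apply: (wordeq_relS (j := 2) isT (u := wpow j.+1 [:: aD; aH]) (v := [::])); solve_words.
apply: (wordeq_rel0 (j := 7) isT (u := wpow j [:: aD; aH]) (v := [:: aB; aG])) => //.
by rewrite wpowSr -!catA.
Qed.

Lemma gkl_eq0 m : wordeq m.+1 (Some [:: aG; aK; aL]) None.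
Proof.
apply: (wordeq_trans (y := Some (wpow m.+1 [:: aD; aH] ++ [:: aD; aL]))); last exact: DHdl_eq0.
apply: (wordeq_relS (j := 5) isT (u := [::]) (v := [:: aL])); solve_words.
Qed.

Lemma gbgk_eq0 m : wordeq m.+1 (Some [:: aG; aB; aG; aK]) None.
Proof.
apply: (wordeq_trans (y := Some ([:: aG; aB; aD; aH] ++ wpow m [:: aD; aH] ++ [:: aD]))).
  apply: (wordeq_relS (j := 5) isT (u := [:: aG; aB]) (v := [::])); solve_words.
apply: (wordeq_rel0 (j := 6) isT (u := [::])
         (v := [:: aH] ++ wpow m [:: aD; aH] ++ [:: aD])); solve_words.
Qed.

Lemma dlk_eq0 m : wordeq m.+1 (Some [:: aD; aL; aK]) None.
Proof.
apply: (wordeq_trans (y := Some [:: aG; aB; aG; aK])); last exact: gbgk_eq0.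
apply: (wordeq_relS (j := 2) isT (u := [::]) (v := [:: aK])); solve_words.
Qed.

Lemma bgbgb_eq0 m : wordeq m.+1 (Some [:: aB; aG; aB; aG; aB]) None.
Proof.
apply: (wordeq_trans (y := Some [:: aB; aD; aL; aB])); first apply: wordeq_sym.
  apply: (wordeq_relS (j := 2) isT (u := [:: aB]) (v := [:: aB])); solve_words.
apply: (wordeq_trans (y := Some [:: aK; aL; aK; aL; aB])).
  apply: (wordeq_relS (j := 0) isT (u := [::]) (v := [:: aL; aB])); solve_words.
apply: (wordeq0_ctx (u := [:: aK; aL]) (v := [::]) (klb_eq0 m)); solve_words.
Qed.

Lemma bgbgk_eq0 m : wordeq m.+1 (Some [:: aB; aG; aB; aG; aK]) None.
Proof. apply: (wordeq0_ctx (u := [:: aB; aG]) (v := [::]) (bgk_eq0 m)); solve_words. Qed.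

Lemma hgbgb_eq0 m : wordeq m.+1 (Some [:: aH; aG; aB; aG; aB]) None.
Proof.
apply: (wordeq_trans (y := Some [:: aL; aK; aL; aB; aG; aB])).
  apply: (wordeq_relS (j := 1) isT (u := [::]) (v := [:: aB; aG; aB])); solve_words.
apply: (wordeq0_ctx (u := [::]) (v := [:: aG; aB]) (lklb_eq0 m)); solve_words.
Qed.

Lemma lbgbg_eq0 m : wordeq m.+1 (Some [:: aL; aB; aG; aB; aG]) None.
Proof. apply: (wordeq0_ctx (u := [::]) (v := [:: aB; aG]) (lbg_eq0 m)); solve_words. Qed.

Lemma DHd_eq0 m : wordeq m.+1 (Some (wpow m.+2 [:: aD; aH] ++ [:: aD])) None.
Proof.
rewrite (wpow_split _ [:: aD] [:: aH]) /=.
apply: (wordeq_trans (y := Some [:: aD; aL; aB; aD])); first apply: wordeq_sym.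
  apply: (wordeq_relS (j := 4) isT (u := [:: aD]) (v := [:: aD])); solve_words.
apply: (wordeq_trans (y := Some [:: aG; aB; aG; aB; aD])).
  apply: (wordeq_relS (j := 2) isT (u := [::]) (v := [:: aB; aD])); solve_words.
apply: (wordeq_rel0 (j := 6) isT (u := [:: aG; aB]) (v := [::])); solve_words.
Qed.

Lemma HDh_eq0 m : wordeq m.+1 (Some (wpow m.+2 [:: aH; aD] ++ [:: aH])) None.
Proof.
have -> : wpow m.+2 [:: aH; aD] ++ [:: aH] = wpow m.+1 [:: aH; aD] ++ [:: aH] ++ [:: aD; aH].
  by rewrite wpowSr -!catA.
apply: (wordeq_trans (y := Some [:: aL; aB; aD; aH])); first apply: wordeq_sym.
  apply: (wordeq_relS (j := 4) isT (u := [::]) (v := [:: aD; aH])); solve_words.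
apply: (wordeq_trans (y := Some [:: aL; aK; aL; aK; aH])).
  apply: (wordeq_relS (j := 0) isT (u := [:: aL]) (v := [:: aH])); solve_words.
apply: (wordeq_rel0 (j := 8) isT (u := [:: aL; aK]) (v := [::])); solve_words.
Qed.

Lemma HDl_eq0 m j : wordeq m.+1 (Some (wpow j.+1 [:: aH; aD] ++ [:: aL])) None.
Proof.
apply: (wordeq_trans (y := Some (wpow j [:: aH; aD] ++ [:: aH; aG; aB; aG]))).
  apply: (wordeq_relS (j := 2) isT (u := wpow j [:: aH; aD] ++ [:: aH]) (v := [::])) => //.
  by rewrite wpowSr -!catA.
  by rewrite /= -!catA.
case: j => [|j].
- apply: (wordeq_trans (y := Some [:: aL; aK; aL; aB; aG])).
    apply: (wordeq_relS (j := 1) isT (u := [::]) (v := [:: aB; aG])); solve_words.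
  apply: (wordeq0_ctx (u := [::]) (v := [:: aG]) (lklb_eq0 m)); solve_words.
- apply: (wordeq_rel0 (j := 7) isT (u := wpow j [:: aH; aD] ++ [:: aH]) (v := [:: aB; aG])) => //.
  by rewrite wpowSr -!catA.
Qed.

Lemma bDH_eq0 m j : wordeq m.+1 (Some ([:: aB] ++ wpow j.+1 [:: aD; aH])) None.
Proof.
apply: (wordeq_trans (y := Some ([:: aK; aL; aK; aH] ++ wpow j [:: aD; aH]))).
  apply: (wordeq_relS (j := 0) isT (u := [::]) (v := [:: aH] ++ wpow j [:: aD; aH])); solve_words.
apply: (wordeq_rel0 (j := 8) isT (u := [:: aK]) (v := wpow j [:: aD; aH])); solve_words.
Qed.

Lemma kHD_eq0 m j : wordeq m.+1 (Some ([:: aK] ++ wpow j.+1 [:: aH; aD])) None.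
Proof.
apply: (wordeq_trans (y := Some ([:: aB; aG; aB; aD] ++ wpow j [:: aH; aD]))).
  apply: (wordeq_relS (j := 3) isT (u := [::]) (v := [:: aD] ++ wpow j [:: aH; aD])); solve_words.
apply: (wordeq_rel0 (j := 6) isT (u := [:: aB]) (v := wpow j [:: aH; aD])); solve_words.
Qed.

Lemma DHd_ge_eq0 m j : (m < j)%N -> wordeq m.+1 (Some (wpow j.+1 [:: aD; aH] ++ [:: aD])) None.
Proof.
move=> Hj; have -> : j.+1 = ((j - m.+1) + m.+2)%N by rewrite addnS subnK.
rewrite wpow_add -catA.
apply: (wordeq0_ctx (u := wpow (j - m.+1) [:: aD; aH]) (v := [::]) (DHd_eq0 m)); solve_words.
Qed.

Lemma HDh_ge_eq0 m j : (m < j)%N -> wordeq m.+1 (Some (wpow j.+1 [:: aH; aD] ++ [:: aH])) None.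
Proof.
move=> Hj; have -> : j.+1 = ((j - m.+1) + m.+2)%N by rewrite addnS subnK.
rewrite wpow_add -catA.
apply: (wordeq0_ctx (u := wpow (j - m.+1) [:: aH; aD]) (v := [::]) (HDh_eq0 m)); solve_words.
Qed.

Section WordsModuloI.
Variables (k : fieldType) (n : nat).

Definition wordQ (s : vertex) (o : option (seq arrow)) : kQ k :=
  if o is Some w then pth k (s, w) else [::].

Lemma valid_in_context a W e s u v : W != [::] -> valid (a, W) -> pend (a, W) = e ->
  valid (s, u ++ W ++ v) = [&& valid (s, u), pend (s, u) == a & valid (e, v)].
Proof.
case: W => [//|b W] _; rewrite /valid /pend /= => /andP [/eqP Hb HW] He.
rewrite composable_cat /= composable_cat HW He Hb /= eq_sym.
by case: (composable s u).
Qed.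

Lemma pend_in_context a W e s u : W != [::] -> pend (a, W) = e -> pend (s, u ++ W) = e.
Proof. by case: W => [//|b W] _; rewrite /pend /= map_cat last_cat. Qed.

Lemma coef_mul3_sandwich c a W e s u v p :
  W != [::] -> valid (a, W) -> pend (a, W) = e ->
  valid (s, u) -> pend (s, u) = a -> valid (e, v) ->
  coef (mul3 (pth k (s, u)) [:: (c, (a, W))] (pth k (e, v))) p
  = c * coef (pth k (s, u ++ W ++ v)) p.
Proof.
move=> W0 VW EW Vu Eu Vv.
have VuW : valid (s, u ++ W).
  by have := valid_in_context s u [::] W0 VW EW; rewrite cats0 Vu Eu eqxx.
rewrite /mul3 mulQ_single mul_term_cons /adjacent /= Vu VW Eu eqxx /=.
rewrite mulQ_single mul_term_cons /adjacent /= VuW Vv (pend_in_context _ _ W0 EW) eqxx /=.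
by rewrite -catA coef_cons coef_nil !coef_pth mul1r mulr1 addr0; case: ifP; rewrite ?mulr1 ?mulr0.
Qed.

Lemma inI_relation j a e W1 W2o c1 c2 s u v :
  gen k n j = (c1, (a, W1)) :: (if W2o is Some W2 then [:: (c2, (a, W2))] else [::]) ->
  c1 = 1 -> c2 = -1 -> W1 != [::] -> valid (a, W1) -> pend (a, W1) = e ->
  (forall W2, W2o = Some W2 -> [/\ W2 != [::], valid (a, W2) & pend (a, W2) = e]) ->
  inI n (subQ (pth k (s, u ++ W1 ++ v)) (wordQ s (omap (fun w => u ++ w ++ v) W2o))).
Proof.
move=> Hg Hc1 Hc2 W10 V1 E1 HW2; subst c1 c2.
case C: [&& valid (s, u), pend (s, u) == a & valid (e, v)].
- move/and3P: C => [Vu /eqP Eu Vv].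
  apply: (inI_eq (inI_gen k n (s, u) j (e, v))) => p.
  rewrite {1}/mul3 Hg -cat1s mulQ_single mul_term_cat -!mulQ_single mulQ_catl coef_cat.
  rewrite -!/(mul3 _ _ _) coef_mul3_sandwich // coef_sub mul1r.
  case: W2o HW2 {Hg} => [W2|] HW2 /=; last by rewrite coef_nil subr0 addr0.
  have [W20 V2 E2] := HW2 W2 erefl.
  by rewrite coef_mul3_sandwich // mulN1r.
- apply: inI_eq0 => p; rewrite coef_sub coef_pth (valid_in_context s u v W10 V1 E1) C /=.
  case: W2o HW2 {Hg} => [W2|] HW2 /=; last by rewrite coef_nil subr0.
  have [W20 V2 E2] := HW2 W2 erefl.
  by rewrite coef_pth (valid_in_context s u v W20 V2 E2) C subr0.
Qed.

Lemma powz_hd m : powz (h k) (d k) m (h k) = [:: (1, (v3, wpow m [:: aH; aD] ++ [:: aH]))].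
Proof.
elim: m => [//|m IH]; rewrite /powz iterS -/(powz _ _ m _) IH.
rewrite /= mulQ_single mul_term_cons /adjacent /valid /= composable_cat.
by rewrite composable_wpow_hd last_wpow_hd /= !mulr1.
Qed.

Lemma powz_dh m : powz (d k) (h k) m (d k) = [:: (1, (v2, wpow m [:: aD; aH] ++ [:: aD]))].
Proof.
elim: m => [//|m IH]; rewrite /powz iterS -/(powz _ _ m _) IH.
rewrite /= mulQ_single mul_term_cons /adjacent /valid /= composable_cat.
by rewrite composable_wpow_dh last_wpow_dh /= !mulr1.
Qed.

Lemma inI_rel (j : 'I_9) s u v : inI n (subQ (pth k (s, u ++ rel_lhs j ++ v))
  (wordQ s (omap (fun w => u ++ w ++ v) (rel_rhs (cpar n).-1 j)))).
Proof.
case: j => [[|[|[|[|[|[|[|[|[|//]]]]]]]]] Hj];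
  [ eapply (@inI_relation (Ordinal Hj) v1 v3)
  | eapply (@inI_relation (Ordinal Hj) v3 v1)
  | eapply (@inI_relation (Ordinal Hj) v2 v1)
  | eapply (@inI_relation (Ordinal Hj) v1 v2)
  | eapply (@inI_relation (Ordinal Hj) v3 v2)
  | eapply (@inI_relation (Ordinal Hj) v2 v3)
  | eapply (@inI_relation (Ordinal Hj) v2 v3 _ None)
  | eapply (@inI_relation (Ordinal Hj) v2 v1 _ None)
  | eapply (@inI_relation (Ordinal Hj) v3 v2 _ None) ].
all: try (rewrite /gen /= ?powz_hd ?powz_dh; reflexivity).
all: try by rewrite /= ?mul1r ?mulr1.
all: move=> W2 [<-]; split; first by case: wpow.
all: by rewrite /valid /pend /= ?composable_cat ?map_cat ?last_cat
  ?composable_wpow_hd ?composable_wpow_dh ?last_wpow_hd ?last_wpow_dh.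
Qed.

Lemma wordeq_inI x y : wordeq (cpar n).-1 x y -> forall s, inI n (subQ (wordQ s x) (wordQ s y)).
Proof.
elim=> {x y} [x|x y _ IH|x y z _ IH1 _ IH2|j u v] s.
- by apply: inI_eq0 => p; rewrite coef_sub subrr.
- by apply: (inI_lincomb (a := -1) (c := 0) (IH s) (IH s)) => p; rewrite !coef_sub; ring.
- by apply: (inI_lincomb (a := 1) (c := 1) (IH1 s) (IH2 s)) => p; rewrite !coef_sub; ring.
- exact: inI_rel.
Qed.

End WordsModuloI.

Inductive nform := F1e | F1b | F1k | F1bg | F1kl | F1bgb | F1klk | F1bgbg
 | F2e | F2g | F2gb | F2gbg | F2dd of nat | F2de of nat
 | F3e | F3l | F3lk | F3lkl | F3hh of nat | F3hd of nat.

Definition nf_word (f : nform) : seq arrow :=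
  match f with
  | F1e => [::] | F1b => [:: aB] | F1k => [:: aK] | F1bg => [:: aB; aG] | F1kl => [:: aK; aL]
  | F1bgb => [:: aB; aG; aB] | F1klk => [:: aK; aL; aK] | F1bgbg => [:: aB; aG; aB; aG]
  | F2e => [::] | F2g => [:: aG] | F2gb => [:: aG; aB] | F2gbg => [:: aG; aB; aG]
  | F2dd j => wpow j [:: aD; aH] ++ [:: aD] | F2de j => wpow j.+1 [:: aD; aH]
  | F3e => [::] | F3l => [:: aL] | F3lk => [:: aL; aK] | F3lkl => [:: aL; aK; aL]
  | F3hh j => wpow j [:: aH; aD] ++ [:: aH] | F3hd j => wpow j.+1 [:: aH; aD]
  end.

Definition nf_src (f : nform) : vertex :=
  match f with
  | F1e | F1b | F1k | F1bg | F1kl | F1bgb | F1klk | F1bgbg => v1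
  | F2e | F2g | F2gb | F2gbg | F2dd _ | F2de _ => v2
  | _ => v3 end.

Definition nf_tgt (f : nform) : vertex :=
  match f with
  | F1e | F1bg | F1kl | F1bgbg | F2g | F2gbg | F3l | F3lkl => v1
  | F1b | F1bgb | F2e | F2gb | F2de _ | F3hh _ => v2
  | _ => v3 end.

Definition nf_extension m f a :=
  wordeq m.+1 (Some (nf_word f ++ [:: a])) None \/
  exists f', [/\ wordeq m.+1 (Some (nf_word f ++ [:: a])) (Some (nf_word f')),
                 nf_src f' = nf_src f & nf_tgt f' = tgt a].

Ltac nf_is f := right; exists f; split; [| by [] | by []].

Lemma nf_extension_v1 m f a : nf_src f = v1 -> src a = nf_tgt f -> nf_extension m f a.
Proof.
rewrite /nf_extension; case: f => [||||||||||||j|j|||||j|j] //= _; elim/arrowW: a => //= _.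
- nf_is F1b; exact: wordeq_refl.
- nf_is F1k; exact: wordeq_refl.
- nf_is F1bg; exact: wordeq_refl.
- nf_is F1klk; apply: (wordeq_relS (j := 0) isT (u := [::]) (v := [::])); solve_words.
- nf_is F1bgb; apply: (wordeq_relS (j := 3) isT (u := [::]) (v := [::])); solve_words.
- nf_is F1kl; exact: wordeq_refl.
- nf_is F1bgb; exact: wordeq_refl.
- left; exact: bgk_eq0.
- left; exact: klb_eq0.
- nf_is F1klk; exact: wordeq_refl.
- nf_is F1bgbg; exact: wordeq_refl.
- left; apply: (wordeq_rel0 (j := 6) isT (u := [:: aB]) (v := [::])); solve_words.
- left; apply: (wordeq_rel0 (j := 8) isT (u := [:: aK]) (v := [::])); solve_words.
- nf_is F1bgbg; apply: (wordeq_trans (y := Some [:: aK; aH; aG])); first apply: wordeq_sym.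
    apply: (wordeq_relS (j := 1) isT (u := [:: aK]) (v := [::])); solve_words.
  apply: (wordeq_relS (j := 3) isT (u := [::]) (v := [:: aG])); solve_words.
- left; exact: bgbgb_eq0.
- left; exact: bgbgk_eq0.
Qed.

Lemma nf_extension_v2 m f a : nf_src f = v2 -> src a = nf_tgt f -> nf_extension m f a.
Proof.
rewrite /nf_extension; case: f => [||||||||||||j|j|||||j|j] //= _; elim/arrowW: a => //= _.
- nf_is F2g; exact: wordeq_refl.
- nf_is (F2dd 0); exact: wordeq_refl.
- nf_is F2gb; exact: wordeq_refl.
- nf_is (F2dd m.+1); apply: (wordeq_relS (j := 5) isT (u := [::]) (v := [::])); solve_words.
- nf_is F2gbg; exact: wordeq_refl.
- left; apply: (wordeq_rel0 (j := 6) isT (u := [::]) (v := [::])); solve_words.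
- nf_is (F2de m.+1).
  have -> : nf_word (F2de m.+1) = [:: aD] ++ wpow m.+1 [:: aH; aD] ++ [:: aH].
    by rewrite /nf_word (wpow_split _ [:: aD] [:: aH]).
  apply: (wordeq_trans (y := Some [:: aD; aL; aB])); first apply: wordeq_sym.
    apply: (wordeq_relS (j := 2) isT (u := [::]) (v := [:: aB])); solve_words.
  apply: (wordeq_relS (j := 4) isT (u := [:: aD]) (v := [::])); solve_words.
- left; exact: gbgk_eq0.
- nf_is (F2de j); rewrite /nf_word wpowSr -catA; exact: wordeq_refl.
- case: j => [|j].
  + nf_is F2gbg; apply: (wordeq_relS (j := 2) isT (u := [::]) (v := [::])); solve_words.
  + left; rewrite -catA; exact: DHdl_eq0.
- left; exact: DHg_eq0.
- case: (leqP j m) => Hj.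
  + nf_is (F2dd j.+1); exact: wordeq_refl.
  + left; exact: (DHd_ge_eq0 Hj).
Qed.

Lemma nf_extension_v3 m f a : nf_src f = v3 -> src a = nf_tgt f -> nf_extension m f a.
Proof.
rewrite /nf_extension; case: f => [||||||||||||j|j|||||j|j] //= _; elim/arrowW: a => //= _.
- nf_is (F3hh 0); exact: wordeq_refl.
- nf_is F3l; exact: wordeq_refl.
- nf_is (F3hh m.+1); apply: (wordeq_relS (j := 4) isT (u := [::]) (v := [::])); solve_words.
- nf_is F3lk; exact: wordeq_refl.
- left; apply: (wordeq_rel0 (j := 8) isT (u := [::]) (v := [::])); solve_words.
- nf_is F3lkl; exact: wordeq_refl.
- left; exact: lklb_eq0.
- nf_is (F3hd m.+1).
  have -> : nf_word (F3hd m.+1) = [:: aH] ++ wpow m.+1 [:: aD; aH] ++ [:: aD].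
    by rewrite /nf_word (wpow_split _ [:: aH] [:: aD]).
  apply: (wordeq_trans (y := Some [:: aH; aG; aK])); first apply: wordeq_sym.
    apply: (wordeq_relS (j := 1) isT (u := [::]) (v := [:: aK])); solve_words.
  apply: (wordeq_relS (j := 5) isT (u := [:: aH]) (v := [::])); solve_words.
- case: j => [|j].
  + nf_is F3lkl; apply: (wordeq_relS (j := 1) isT (u := [::]) (v := [::])); solve_words.
  + left; rewrite -catA; exact: HDhg_eq0.
- nf_is (F3hd j); rewrite /nf_word wpowSr -catA; exact: wordeq_refl.
- case: (leqP j m) => Hj.
  + nf_is (F3hh j.+1); exact: wordeq_refl.
  + left; exact: (HDh_ge_eq0 Hj).
- left; exact: HDl_eq0.
Qed.

Lemma nf_extensionP m f a : src a = nf_tgt f -> nf_extension m f a.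
Proof.
have : [\/ nf_src f = v1, nf_src f = v2 | nf_src f = v3].
  by case: f => *; by [apply: Or31 | apply: Or32 | apply: Or33].
by case=> [/nf_extension_v1|/nf_extension_v2|/nf_extension_v3]; apply.
Qed.

Lemma wordeq_nf m i w : composable i w -> exists o, wordeq m.+1 (Some w) o /\
  (o = None \/ exists f, o = Some (nf_word f) /\ nf_src f = i /\ nf_tgt f = last i (map tgt w)).
Proof.
elim/last_ind: w => [|w a IH].
  move=> _; exists (Some [::]); split; first exact: wordeq_refl.
  by right; elim/vertexW: i; [exists F1e | exists F2e | exists F3e].
rewrite -cats1 composable_cat /= andbT => /andP [Hw /eqP Ha].
have [o [Hc Ho]] := IH Hw.
have Hc' := wordeq_catr [:: a] Hc.
case: Ho => [Eo|[f [Eo [Hfs Hfe]]]]; subst o.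
  by exists None; split => //; left.
rewrite -Hfe in Ha; have [Hz|[f' [Hc2 Hs2 He2]]] := nf_extensionP m Ha.
  by exists None; split => //; [exact: wordeq_trans Hc' Hz | left].
exists (Some (nf_word f')); split; first exact: wordeq_trans Hc' Hc2.
by right; exists f'; rewrite Hs2 Hfs He2 map_cat last_cat.
Qed.

Definition cycles := vertex -> option (seq arrow).

Definition cycles_closed (C : cycles) :=
  forall v w, C v = Some w -> valid (v, w) && (pend (v, w) == v).

Definition cycles_commute m (C : cycles) :=
  forall a, wordeq m (omap (cat^~ [:: a]) (C (src a))) (omap (cat [:: a]) (C (tgt a))).

Definition cyc_one : cycles := fun=> Some [::].

Definition cyc_bg : cycles := fun v =>
  match nat_of_ord v with 0 => Some [:: aB; aG] | 1 => Some [:: aG; aB] | _ => None end.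

Definition cyc_kl : cycles := fun v =>
  match nat_of_ord v with 0 => Some [:: aK; aL] | 1 => None | _ => Some [:: aL; aK] end.

Definition cyc_bgbg : cycles := fun v =>
  match nat_of_ord v with
  | 0 => Some [:: aB; aG; aB; aG] | 1 => Some [:: aG; aB; aG; aB] | _ => None end.

Definition cyc_dh (j : nat) : cycles := fun v =>
  match nat_of_ord v with
  | 0 => None | 1 => Some (wpow j.+1 [:: aD; aH]) | _ => Some (wpow j.+1 [:: aH; aD]) end.

Lemma cycles_closed_one : cycles_closed cyc_one.
Proof. by move=> v w [<-]; rewrite /valid /pend /= eqxx. Qed.

Lemma cycles_closed_bg : cycles_closed cyc_bg.
Proof. by elim/vertexW => w //= [<-]. Qed.

Lemma cycles_closed_kl : cycles_closed cyc_kl.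
Proof. by elim/vertexW => w //= [<-]. Qed.

Lemma cycles_closed_bgbg : cycles_closed cyc_bgbg.
Proof. by elim/vertexW => w //= [<-]. Qed.

Lemma cycles_closed_dh j : cycles_closed (cyc_dh j).
Proof.
elim/vertexW => w //= [<-]; rewrite /valid /pend /=.
- by rewrite composable_wpow_dh last_wpow_dh.
- by rewrite composable_wpow_hd last_wpow_hd.
Qed.

Lemma cycles_commute_one m : cycles_commute m cyc_one.
Proof. by move=> a; exact: wordeq_refl. Qed.

Lemma cycles_commute_bg m : cycles_commute m.+1 cyc_bg.
Proof.
elim/arrowW => /=.
- exact: wordeq_refl.
- exact: wordeq_refl.
- by apply: (wordeq_rel0 (j := 6) isT (u := [::]) (v := [::])).
- exact: wordeq_sym (hgb_eq0 m).
- exact: bgk_eq0.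
- exact: wordeq_sym (lbg_eq0 m).
Qed.

Lemma cycles_commute_kl m : cycles_commute m.+1 cyc_kl.
Proof.
elim/arrowW => /=.
- exact: klb_eq0.
- exact: wordeq_sym (gkl_eq0 m).
- exact: wordeq_sym (dlk_eq0 m).
- by apply: (wordeq_rel0 (j := 8) isT (u := [::]) (v := [::])).
- exact: wordeq_refl.
- exact: wordeq_refl.
Qed.

Lemma cycles_commute_bgbg m : cycles_commute m.+1 cyc_bgbg.
Proof.
elim/arrowW => /=.
- exact: wordeq_refl.
- exact: wordeq_refl.
- by apply: (wordeq_rel0 (j := 6) isT (u := [:: aG; aB]) (v := [::])).
- exact: wordeq_sym (hgbgb_eq0 m).
- exact: bgbgk_eq0.
- exact: wordeq_sym (lbgbg_eq0 m).
Qed.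

Lemma cycles_commute_dh m j : cycles_commute m.+1 (cyc_dh j).
Proof.
elim/arrowW => /=.
- exact: wordeq_sym (bDH_eq0 m j).
- exact: DHg_eq0.
- by have /= <- := wpow_rot j.+1 [:: aD] [:: aH]; exact: wordeq_refl.
- by have /= <- := wpow_rot j.+1 [:: aH] [:: aD]; exact: wordeq_refl.
- exact: wordeq_sym (kHD_eq0 m j).
- exact: HDl_eq0.
Qed.

Lemma cycles_commute_path m C : cycles_commute m C -> forall v w, composable v w ->
  wordeq m (omap (cat^~ w) (C v)) (omap (cat w) (C (last v (map tgt w)))).
Proof.
move=> HC v w; elim: w v => [|a w IH] v /=.
  by case: (C v) => [r|] _ /=; rewrite ?cats0; exact: wordeq_refl.
case/andP=> /eqP Ha Hw.
have H1 := wordeq_catr w (HC a); have H2 := wordeq_catl [:: a] (IH _ Hw).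
rewrite Ha in H1; apply: (wordeq_trans _ (wordeq_trans H1 _)).
  by case: (C v) => [r|] /=; rewrite -?catA; exact: wordeq_refl.
by case: (C (tgt a)) H2 => [r|]; case: (C _).
Qed.

Lemma nf_cycle_central m f : nf_src f = nf_tgt f ->
  exists C, [/\ C (nf_src f) = Some (nf_word f), cycles_closed C & cycles_commute m.+1 C].
Proof.
case: f => [||||||||||||j|j|||||j|j] //= _.
- by exists cyc_one; split; [|exact: cycles_closed_one|exact: cycles_commute_one].
- by exists cyc_bg; split; [|exact: cycles_closed_bg|exact: cycles_commute_bg].
- by exists cyc_kl; split; [|exact: cycles_closed_kl|exact: cycles_commute_kl].
- by exists cyc_bgbg; split; [|exact: cycles_closed_bgbg|exact: cycles_commute_bgbg].
- by exists cyc_one; split; [|exact: cycles_closed_one|exact: cycles_commute_one].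
- by exists cyc_bg; split; [|exact: cycles_closed_bg|exact: cycles_commute_bg].
- by exists (cyc_dh j); split; [|exact: cycles_closed_dh|exact: cycles_commute_dh].
- by exists cyc_one; split; [|exact: cycles_closed_one|exact: cycles_commute_one].
- by exists cyc_kl; split; [|exact: cycles_closed_kl|exact: cycles_commute_kl].
- by exists (cyc_dh j); split; [|exact: cycles_closed_dh|exact: cycles_commute_dh].
Qed.

Section CentralCorners.
Variables (k : fieldType) (n : nat).
Implicit Types (x z : kQ k) (p q : Defs.path) (C : cycles).

Definition cycle_sum C : kQ k := wordQ k v1 (C v1) ++ wordQ k v2 (C v2) ++ wordQ k v3 (C v3).

Lemma coef_wordQ_ne v o p : v != p.1 -> coef (wordQ k v o) p = 0.
Proof.
case: o => [w|] /= Hv; last by rewrite coef_nil.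
by case: p Hv => s w' /= Hv; rewrite coef_pth xpair_eqE (negbTE Hv) andbF.
Qed.

Lemma coef_cycle_sum C p : coef (cycle_sum C) p = coef (wordQ k p.1 (C p.1)) p.
Proof.
case: p => s w; rewrite /cycle_sum !coef_cat /=; elim/vertexW: s.
- by rewrite (@coef_wordQ_ne v2) // (@coef_wordQ_ne v3) // !addr0.
- by rewrite (@coef_wordQ_ne v1) // (@coef_wordQ_ne v3) // add0r addr0.
- by rewrite (@coef_wordQ_ne v1) // (@coef_wordQ_ne v2) // !add0r.
Qed.

Lemma mul_wordQ_pth C v q : cycles_closed C -> valid q ->
  mulQ (wordQ k v (C v)) (pth k q) =
  if v == q.1 then wordQ k v (omap (cat^~ q.2) (C v)) else [::].
Proof.
move=> HC Vq; case E: (C v) => [w|] /=; last by case: (v == q.1).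
have /andP [Vw /eqP Pw] := HC v w E.
rewrite mulQ_single mul_term_cons /adjacent /= Vw Vq Pw /=.
by case: (v == q.1) => //; rewrite mulr1.
Qed.

Lemma mul_pth_wordQ C v q : cycles_closed C -> valid q ->
  mulQ (pth k q) (wordQ k v (C v)) =
  if pend q == v then wordQ k q.1 (omap (cat q.2) (C v)) else [::].
Proof.
move=> HC Vq; case E: (C v) => [w|] /=; last by case: (pend q == v).
have /andP [Vw /eqP Pw] := HC v w E.
rewrite mulQ_single mul_term_cons /adjacent /= Vw Vq /=.
by case: (pend q == v) => //; rewrite mulr1.
Qed.

Lemma coef_cycle_sum_mulr C q p : cycles_closed C -> valid q ->
  coef (mulQ (cycle_sum C) (pth k q)) p = coef (wordQ k q.1 (omap (cat^~ q.2) (C q.1))) p.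
Proof.
move=> HC Vq; rewrite /cycle_sum !mulQ_catl !(mul_wordQ_pth _ HC Vq).
by case: q Vq => s w _ /=; elim/vertexW: s; rewrite /= ?cats0.
Qed.

Lemma coef_cycle_sum_mull C q p : cycles_closed C -> valid q ->
  coef (mulQ (pth k q) (cycle_sum C)) p = coef (wordQ k q.1 (omap (cat q.2) (C (pend q)))) p.
Proof.
move=> HC Vq; rewrite /cycle_sum mulQ_single !mul_term_cat -!mulQ_single.
rewrite !(mul_pth_wordQ _ HC Vq).
by elim/vertexW: (pend q); rewrite /= ?cats0.
Qed.

Lemma mulQ_pth_invalidr x q : ~~ valid q -> mulQ x (pth k q) = [::].
Proof.
move=> Vq; elim: x => [|t x IH] //.
by rewrite mulQ_cons IH mul_term_cons /adjacent (negbTE Vq) andbF.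
Qed.

Lemma mulQ_pth_invalidl x q : ~~ valid q -> mulQ (pth k q) x = [::].
Proof.
move=> Vq; rewrite mulQ_single; elim: x => [|u x IH] //.
by rewrite mul_term_cons IH /adjacent /= (negbTE Vq).
Qed.

Lemma central_cycle_sum C : cycles_closed C -> cycles_commute (cpar n).-1 C ->
  centralI n (cycle_sum C).
Proof.
move=> HCc HC; apply: centralI_paths => q.
case Vq: (valid q); last first.
  apply: inI_eq0 => p; rewrite coef_sub mulQ_pth_invalidr ?mulQ_pth_invalidl ?Vq //.
  by rewrite coef_nil subr0.
apply: (inI_eq (wordeq_inI k (cycles_commute_path HC Vq) q.1)) => p.
by rewrite !coef_sub coef_cycle_sum_mulr // coef_cycle_sum_mull.
Qed.

Lemma coef_corner_cycle_sum i C p : cycles_closed C ->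
  coef (mul3 (idem k i) (cycle_sum C) (idem k i)) p = coef (wordQ k i (C i)) p.
Proof.
move=> HC; rewrite coef_corner coef_cycle_sum; case: p => s w /=.
case: (eqVneq s i) => [->|Hne] /=; last by rewrite (@coef_wordQ_ne i) // eq_sym.
case E: (C i) => [w'|] /=; last by rewrite coef_nil; case: ifP.
rewrite coef_pth; have /andP [V' /eqP P'] := HC i w' E.
case: (eqVneq (i, w') (i, w)) => [[<-]|Hp] /=; first by rewrite P' eqxx V'.
by case: ifP; rewrite andbF.
Qed.

Lemma coef_corner_cycle i w p : valid (i, w) -> pend (i, w) = i ->
  coef (mul3 (idem k i) (pth k (i, w)) (idem k i)) p = coef (pth k (i, w)) p.
Proof.
move=> V P; rewrite coef_corner coef_pth.
case: (eqVneq (i, w) p) => [<-|Hp] /=; first by rewrite eqxx P eqxx V.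
by rewrite andbF; case: ifP.
Qed.

Definition corner_central i x := exists z, centralI n z /\
  inI n (subQ (mul3 (idem k i) x (idem k i)) (mul3 (idem k i) z (idem k i))).

Lemma corner_central_nil i : corner_central i [::].
Proof.
exists [::]; split; first exact: central_nil.
by apply: inI_eq0 => p; rewrite coef_sub !coef_corner coef_nil; case: ifP; rewrite subrr.
Qed.

Lemma corner_central_cons i c q x :
  corner_central i (pth k q) -> corner_central i x -> corner_central i ((c, q) :: x).
Proof.
move=> [zq [Cq Iq]] [z [Cz Iz]].
exists (scaleQ c zq ++ z); split; first exact: central_cat (central_scale c Cq) Cz.
apply: (inI_lincomb (a := c) (c := 1) Iq Iz) => p.
rewrite !coef_sub !coef_corner coef_cons coef_cat coef_scale coef_pth.
by case: ifP => _; [case: (valid q && _) | ]; ring.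
Qed.

Lemma corner_central_cycle i w m : (cpar n).-1 = m.+1 ->
  valid (i, w) -> pend (i, w) = i -> corner_central i (pth k (i, w)).
Proof.
move=> Em Vw Ew; have [o [Ho Hnf]] := wordeq_nf m Vw.
rewrite -Em in Ho; have HI := wordeq_inI k Ho i.
case: Hnf => [Eo|[f [Eo [Hfs Hfe]]]]; subst o.
  exists [::]; split; first exact: central_nil.
  apply: (inI_eq HI) => p.
  by rewrite !coef_sub coef_corner_cycle // !coef_corner !coef_nil /=; case: ifP.
rewrite /= in Hfs Hfe.
have [C [HCi HCc HC]] := nf_cycle_central m (etrans Hfs (esym (etrans Hfe Ew))).
exists (cycle_sum C); split; first by apply: central_cycle_sum; rewrite // Em.
apply: (inI_eq HI) => p.
by rewrite !coef_sub coef_corner_cycle // coef_corner_cycle_sum // -Hfs HCi.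
Qed.

Lemma corner_central_pth i q m : (cpar n).-1 = m.+1 -> corner_central i (pth k q).
Proof.
move=> Em; case Hq: [&& valid q, q.1 == i & pend q == i].
  move: Hq; case: q => s w /and3P [Vq /= /eqP Es /eqP Eq]; subst s.
  exact: corner_central_cycle Em Vq Eq.
exists [::]; split; first exact: central_nil.
apply: inI_eq0 => p; rewrite coef_sub !coef_corner coef_pth coef_nil.
case: (eqVneq q p) => [<-|Hp]; last by rewrite andbF; case: ifP; rewrite subr0.
by move: Hq; case: (valid q); case: (q.1 == i); case: (pend q == i) => //= _; rewrite subr0.
Qed.

End CentralCorners.

Lemma cpar_predS n : (3 <= n)%N -> exists m, (cpar n).-1 = m.+1.
Proof.
move=> hn; have H2 : (2 <= cpar n)%N by rewrite /cpar -{1}(expn1 2) leq_exp2l // subn_gt0.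
by exists (cpar n).-2; case: (cpar n) H2 => [|[|c]].
Qed.

Theorem proposition2p4 (k : closedFieldType) (char2 : (2%N \in [pchar k]))
  (n : nat) (hn : (3 <= n)%N) (i : vertex) :
  (forall x : kQ k, exists z : kQ k,
      centralI n z /\
      inI n (subQ (mul3 (idem k i) x (idem k i)) (mul3 (idem k i) z (idem k i))))
  /\
  (forall z : kQ k, centralI n z -> exists x : kQ k,
      inI n (subQ (mul3 (idem k i) z (idem k i)) (mul3 (idem k i) x (idem k i)))).
Proof.
have [m Em] := cpar_predS hn.
split; last by move=> z _; exists z; apply: inI_eq0 => p; rewrite coef_sub subrr.
elim=> [|[c q] x IH]; first exact: corner_central_nil.
exact: (corner_central_cons c (corner_central_pth k i q Em) IH).
Qed.
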